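(* Let $K$ be the field of fractions of a complete discrete valuation ring $\mathcal{O}$. In the coefficient-choosing game of degree $d = 4$ over $K$, if Nora makes the last move then Nora has a winning strategy.
   Context: The coefficient-choosing game of degree $d$ over $K$: Nora and Wanda alternately choose coefficients of $f(x) = a_d x^d + \cdots + a_0$; on each move the current player picks a not-yet-chosen coefficient and assigns it a value in $K$, subject to $a_d \neq 0$, $a_0 \neq 0$. After all $d+1$ coefficients are chosen, Wanda wins if $f$ has a root in $K$, and Nora wins otherwise. *)

From HB Require Import structures.
From mathcomp Require Import all_boot all_order all_algebra.
Set Implicit Arguments. Unset Strict Implicit. Unset Printing Implicit Defensive.
Import Order.TTheory GRing.Theory Num.Theory.
Local Open Scope ring_scope.

(* A normalized discrete valuation v : K^* ->> Z (the value at 0 is irrelevant;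
   it stands for +oo and is never used).  Its valuation ring
   O = {x | x = 0 \/ 0 <= v x} is a discrete valuation ring with fraction field K. *)
Definition is_discrete_valuation (K : fieldType) (v : K -> int) : Prop :=
  [/\ (forall x y : K, x != 0 -> y != 0 -> v (x * y) = v x + v y),
      (forall x y : K, x != 0 -> y != 0 -> x + y != 0 ->
          Num.min (v x) (v y) <= v (x + y))
    & (exists pi : K, pi != 0 /\ v pi = 1)].

Definition vclose (K : fieldType) (v : K -> int) (N : int) (x y : K) : Prop :=
  x = y \/ N <= v (x - y).

Definition vcauchy (K : fieldType) (v : K -> int) (u : nat -> K) : Prop :=
  forall N : int, exists M : nat, forall m n : nat,
    (M <= m)%N -> (M <= n)%N -> vclose v N (u m) (u n).

Definition vconverges (K : fieldType) (v : K -> int) (u : nat -> K) (l : K) : Prop :=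
  forall N : int, exists M : nat, forall n : nat, (M <= n)%N -> vclose v N (u n) l.

Definition vcomplete (K : fieldType) (v : K -> int) : Prop :=
  forall u : nat -> K, vcauchy v u -> exists l : K, vconverges v u l.

Inductive player := Nora | Wanda.

Definition other (p : player) : player :=
  match p with Nora => Wanda | Wanda => Nora end.

(* a position: coefficient a_i is [Some c] if already chosen, [None] otherwise *)
Definition position (K : fieldType) (d : nat) := 'I_d.+1 -> option K.

Definition legal_move (K : fieldType) (d : nat) (s : position K d)
    (i : 'I_d.+1) (a : K) : Prop :=
  s i = None /\ ((val i = 0)%N \/ (val i = d)%N -> a != 0).

Definition play (K : fieldType) (d : nat) (s : position K d)
    (i : 'I_d.+1) (a : K) : position K d :=
  fun j => if j == i then Some a else s j.

Definition poly_of_position (K : fieldType) (d : nat) (s : position K d) : {poly K} :=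
  \poly_(i < d.+1) (if insub i is Some j then odflt 0 (s j) else 0).

Fixpoint nora_wins (K : fieldType) (d : nat) (n : nat) (p : player)
    (s : position K d) : Prop :=
  match n with
  | 0 => forall x : K, ~~ root (poly_of_position s) x
  | n'.+1 =>
      match p with
      | Nora => exists i a, legal_move s i a /\ nora_wins n' Wanda (play s i a)
      | Wanda => forall i a, legal_move s i a -> nora_wins n' Nora (play s i a)
      end
  end.

Definition empty_position (K : fieldType) (d : nat) : position K d := fun _ => None.

Definition nora_has_winning_strategy (K : fieldType) (d : nat) (first : player) : Prop :=
  @nora_wins K d d.+1 first (@empty_position K d).

Definition last_mover (d : nat) (first : player) : player :=
  if odd d.+1 then first else other first.

From mathcomp Require Import all_boot all_order all_algebra zify.
Import Order.TTheory GRing.Theory Num.Theory.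
Local Open Scope ring_scope.
Set Implicit Arguments. Unset Strict Implicit. Unset Printing Implicit Defensive.

(* Nora opens with a_1 = 0 and answers Wanda's first move by zeroing a_3 (a_2
   if Wanda took a_3), so that Wanda's second move leaves Nora the last of
   a_0, a_2, a_4 to fill.  By the ultrametric inequality a polynomial has no
   root as soon as, for every t : int, a single term a_i x^i with v x = t has
   least valuation, i.e. its Newton polygon has no edge of integral slope.
   Filling an end coefficient with a very negative valuation, incongruent mod 4
   to that of the other end, makes the polygon a single edge of non-integral
   slope.  Filling a_2 when a_1 = a_3 = 0 works with 0 if 4 does not divide
   v a_0 - v a_4, and otherwise with a very negative valuation of parity
   opposite to v a_0, which gives two edges of slope in 1/2 + Z. *)

Section DiscreteValuation.
Variables (K : fieldType) (v : K -> int).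
Hypothesis v_discrete : is_discrete_valuation v.

Lemma valuationM x y : x != 0 -> y != 0 -> v (x * y) = v x + v y.
Proof. by case: v_discrete => vM _ _; apply: vM. Qed.

Lemma valuationD x y :
  x != 0 -> y != 0 -> x + y != 0 -> Num.min (v x) (v y) <= v (x + y).
Proof. by case: v_discrete => _ vD _; apply: vD. Qed.

Lemma valuation1 : v 1 = 0.
Proof.
have := valuationM (oner_neq0 K) (oner_neq0 K); rewrite mulr1 => v1E.
by apply: (addrI (v 1)); rewrite addr0 -v1E.
Qed.

Lemma valuationN x : x != 0 -> v (- x) = v x.
Proof.
have N1_neq0 : (-1 : K) != 0 by rewrite oppr_eq0 oner_neq0.
have := valuationM N1_neq0 N1_neq0; rewrite mulrNN mulr1 valuation1 => vN1.
by move=> x_neq0; rewrite -mulN1r valuationM //; lia.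
Qed.

Lemma valuationX x n : x != 0 -> v (x ^+ n) = n%:Z * v x.
Proof.
move=> x_neq0; elim: n => [|n IHn]; first by rewrite expr0 valuation1 mul0r.
by rewrite exprS valuationM ?expf_neq0 // IHn -{1}(mul1r (v x)) -mulrDl.
Qed.

Lemma valuationV x : x != 0 -> v x^-1 = - v x.
Proof.
move=> x_neq0; have := valuationM x_neq0 (invr_neq0 x_neq0).
by rewrite mulfV // valuation1 => ?; lia.
Qed.

Lemma valuation_surj (z : int) : exists2 c : K, c != 0 & v c = z.
Proof.
case: v_discrete => _ _ [pi [pi_neq0 v_pi]].
have piV_neq0 : pi^-1 != 0 by rewrite invr_eq0.
case: z => n.
  by exists (pi ^+ n); rewrite ?expf_neq0 // valuationX // v_pi mulr1.
exists (pi^-1 ^+ n.+1); first by rewrite expf_neq0.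
by rewrite valuationX // valuationV // v_pi NegzE; lia.
Qed.

Definition dominates (a y : K) := y = 0 \/ v a < v y.

Lemma dominatesD a y z : dominates a y -> dominates a z -> dominates a (y + z).
Proof.
move=> [->|a_y]; first by rewrite add0r.
move=> [->|a_z]; first by rewrite addr0; right.
have [|yz_neq0] := eqVneq (y + z) 0; first by left.
have [y0|y_neq0] := eqVneq y 0; first by move: a_y; rewrite y0 add0r; right.
have [z0|z_neq0] := eqVneq z 0; first by move: a_z; rewrite z0 addr0; right.
right; apply: lt_le_trans (valuationD y_neq0 z_neq0 yz_neq0).
by rewrite /Num.min; case: ifP.
Qed.

Lemma addr_dominated_neq0 a y : a != 0 -> dominates a y -> a + y != 0.
Proof.
move=> a_neq0 [->|a_y]; first by rewrite addr0.
apply: contraTneq a_y => /eqP; rewrite addrC addr_eq0 => /eqP->.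
by rewrite valuationN // ltxx.
Qed.

Lemma sum_dominated_neq0 (I : finType) (F : I -> K) j :
  F j != 0 -> (forall i, i != j -> dominates (F j) (F i)) -> \sum_i F i != 0.
Proof.
move=> Fj_neq0 Fj_dom; rewrite (bigD1 j) //=; apply: addr_dominated_neq0 => //.
by apply: (big_ind (dominates (F j))) => //; [left | exact: dominatesD].
Qed.

Lemma no_root_of_dominant_term (p : {poly K}) n :
  (size p <= n)%N -> p`_0 != 0 ->
  (forall t : int, exists2 j, p`_j != 0 &
     forall i, (i < n)%N -> i != j -> p`_i != 0 ->
       v p`_j + j%:Z * t < v p`_i + i%:Z * t) ->
  forall x, ~~ root p x.
Proof.
move=> size_p p0_neq0 dominant x; rewrite /root.
have [->|x_neq0] := eqVneq x 0; first by rewrite horner_coef0.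
rewrite (horner_coef_wide _ size_p).
have [j pj_neq0 j_min] := dominant (v x).
have lt_jn : (j < n)%N.
  rewrite (leq_trans _ size_p) // ltnNge.
  by apply: contra pj_neq0 => /leq_sizeP/(_ j (leqnn j))->.
apply: (sum_dominated_neq0 (j := Ordinal lt_jn)) => /=.
  by rewrite mulf_neq0 ?expf_neq0.
move=> i ij; have [->|pi_neq0] := eqVneq p`_i 0; first by left; rewrite mul0r.
right; rewrite !valuationM ?expf_neq0 // !valuationX //.
exact: j_min.
Qed.

Lemma coef_add_monomial (p : {poly K}) k a : p`_k = 0 -> (p + a *: 'X^k)`_k = a.
Proof. by move=> pk0; rewrite coefD coefZ coefXn eqxx pk0 mulr1 add0r. Qed.

Lemma coef_add_monomial_neq (p : {poly K}) k a i :
  i != k -> (p + a *: 'X^k)`_i = p`_i.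
Proof. by move=> /negbTE ik; rewrite coefD coefZ coefXn ik mulr0 addr0. Qed.

Lemma size_add_monomial_le (p : {poly K}) k a n :
  (size p <= n)%N -> (k < n)%N -> (size (p + a *: 'X^k)%R <= n)%N.
Proof.
move=> size_p lt_kn; rewrite (leq_trans (size_polyD _ _)) // geq_max size_p.
by rewrite (leq_trans (size_scale_leq _ _)) // size_polyXn.
Qed.

Lemma rootless_fill_coef0 (p : {poly K}) :
  (size p <= 5)%N -> p`_0 = 0 -> p`_4 != 0 ->
  exists2 a, a != 0 & forall x, ~~ root (p + a *: 'X^0) x.
Proof.
move=> size_p p0 p4_neq0.
have [a a_neq0 va] := valuation_surj
  (v p`_4 - 4 * (`|v p`_1| + `|v p`_2| + `|v p`_3| + `|v p`_4|) - 1).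
exists a => //; apply: (@no_root_of_dominant_term _ 5) => [||t].
- exact: size_add_monomial_le.
- by rewrite coef_add_monomial.
have [a_min|p4_min] : v a < v p`_4 + 4 * t \/ v p`_4 + 4 * t < v a by lia.
- exists 0%N; first by rewrite coef_add_monomial.
  move=> [|[|[|[|[|i]]]]] // _ _ _;
    by rewrite coef_add_monomial // !coef_add_monomial_neq //; lia.
- exists 4%N; first by rewrite coef_add_monomial_neq.
  move=> [|[|[|[|[|i]]]]] // _ _ _;
    by rewrite ?coef_add_monomial // !coef_add_monomial_neq //; lia.
Qed.

Lemma rootless_fill_coef4 (p : {poly K}) :
  (size p <= 5)%N -> p`_4 = 0 -> p`_0 != 0 ->
  exists2 a, a != 0 & forall x, ~~ root (p + a *: 'X^4) x.
Proof.
move=> size_p p4 p0_neq0.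
have [a a_neq0 va] := valuation_surj
  (v p`_0 - 4 * (`|v p`_0| + `|v p`_1| + `|v p`_2| + `|v p`_3|) - 1).
exists a => //; apply: (@no_root_of_dominant_term _ 5) => [||t].
- exact: size_add_monomial_le.
- by rewrite coef_add_monomial_neq.
have [p0_min|a_min] : v p`_0 < v a + 4 * t \/ v a + 4 * t < v p`_0 by lia.
- exists 0%N; first by rewrite coef_add_monomial_neq.
  move=> [|[|[|[|[|i]]]]] // _ _ _;
    by rewrite ?coef_add_monomial // !coef_add_monomial_neq //; lia.
- exists 4%N; first by rewrite coef_add_monomial.
  move=> [|[|[|[|[|i]]]]] // _ _ _;
    by rewrite coef_add_monomial // !coef_add_monomial_neq //; lia.
Qed.

Lemma no_root_quartic_binomial (p : {poly K}) :
  (size p <= 5)%N -> p`_1 = 0 -> p`_2 = 0 -> p`_3 = 0 ->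
  p`_0 != 0 -> p`_4 != 0 -> ((v p`_0 - v p`_4) %% 4 != 0)%Z ->
  forall x, ~~ root p x.
Proof.
move=> size_p p1 p2 p3 p0_neq0 p4_neq0 gap.
apply: no_root_of_dominant_term size_p _ _ => // t.
have [p0_min|p4_min] : v p`_0 < v p`_4 + 4 * t \/ v p`_4 + 4 * t < v p`_0 by lia.
- exists 0%N => //.
  by move=> [|[|[|[|[|i]]]]] // _; rewrite ?p1 ?p2 ?p3 ?eqxx // => _; lia.
- exists 4%N => //.
  by move=> [|[|[|[|[|i]]]]] // _; rewrite ?p1 ?p2 ?p3 ?eqxx // => _; lia.
Qed.

Lemma rootless_fill_coef2 (p : {poly K}) :
  (size p <= 5)%N -> p`_1 = 0 -> p`_2 = 0 -> p`_3 = 0 ->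
  p`_0 != 0 -> p`_4 != 0 ->
  exists a, forall x, ~~ root (p + a *: 'X^2) x.
Proof.
move=> size_p p1 p2 p3 p0_neq0 p4_neq0.
have [gap|even_gap] :
    ((v p`_0 - v p`_4) %% 4 != 0 \/ (v p`_0 - v p`_4) %% 2 = 0)%Z by lia.
  by exists 0; rewrite scale0r addr0; apply: no_root_quartic_binomial.
have [a a_neq0 va] := valuation_surj (v p`_0 - 2 * (`|v p`_0| + `|v p`_4|) - 1).
exists a; apply: (@no_root_of_dominant_term _ 5) => [||t].
- exact: size_add_monomial_le.
- by rewrite coef_add_monomial_neq.
have [[p0_min p0_min']|[[a_min a_min']|[p4_min p4_min']]] :
    (v p`_0 < v a + 2 * t /\ v p`_0 < v p`_4 + 4 * t) \/
    (v a + 2 * t < v p`_0 /\ v a + 2 * t < v p`_4 + 4 * t) \/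
    (v p`_4 + 4 * t < v p`_0 /\ v p`_4 + 4 * t < v a + 2 * t) by lia.
- exists 0%N; first by rewrite coef_add_monomial_neq.
  move=> [|[|[|[|[|i]]]]] // _ _;
    rewrite ?coef_add_monomial // !coef_add_monomial_neq // ?p1 ?p3 ?eqxx //;
    by move=> _; lia.
- exists 2%N; first by rewrite coef_add_monomial.
  move=> [|[|[|[|[|i]]]]] // _ _;
    rewrite ?coef_add_monomial // !coef_add_monomial_neq // ?p1 ?p3 ?eqxx //;
    by move=> _; lia.
- exists 4%N; first by rewrite coef_add_monomial_neq.
  move=> [|[|[|[|[|i]]]]] // _ _;
    rewrite ?coef_add_monomial // !coef_add_monomial_neq // ?p1 ?p3 ?eqxx //;
    by move=> _; lia.
Qed.

End DiscreteValuation.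

Notation ord5 k := (@Ordinal 5 k isT).

Lemma forall_ord5 (P : 'I_5 -> Prop) :
  P (ord5 0) -> P (ord5 1) -> P (ord5 2) -> P (ord5 3) -> P (ord5 4) ->
  forall i, P i.
Proof.
move=> P0 P1 P2 P3 P4 [[|[|[|[|[|//]]]]] lt_i5];
  by rewrite (bool_irrelevance lt_i5 isT).
Qed.

Section Positions.
Variables (K : fieldType) (d : nat).
Implicit Types (s : position K d) (i : 'I_d.+1) (a : K).

Lemma coef_poly_of_position s i : (poly_of_position s)`_i = odflt 0 (s i).
Proof. by rewrite coef_poly ltn_ord valK. Qed.

Lemma poly_of_play s i a :
  s i = None -> poly_of_position (play s i a) = poly_of_position s + a *: 'X^i.
Proof.
move=> s_i; apply/polyP => k; rewrite coefD coefZ coefXn !coef_poly.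
have [lt_kd|ge_kd] := ltnP k d.+1; last first.
  by rewrite gtn_eqF ?mulr0 ?addr0 // (leq_trans (ltn_ord i)).
rewrite -[k]/(val (Ordinal lt_kd)) valK val_eqE /play.
by case: eqP => [->|_]; rewrite ?s_i ?mulr1 ?add0r ?mulr0 ?addr0.
Qed.

Lemma nora_wins_last_move s i a :
  legal_move s i a -> (forall x, ~~ root (poly_of_position s + a *: 'X^i) x) ->
  nora_wins 1 Nora s.
Proof.
move=> legal rootless; exists i, a; split => //=.
by rewrite poly_of_play //; case: legal.
Qed.

End Positions.

Section QuarticGame.
Variables (K : fieldType) (v : K -> int).
Hypothesis v_discrete : is_discrete_valuation v.
Implicit Types (s : position K 4) (c : K).

Lemma nora_wins_fill_coef0 s c :
  s (ord5 0) = None -> s (ord5 4) = Some c -> c != 0 -> nora_wins 1 Nora s.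
Proof.
move=> s0 s4 c_neq0.
set p := poly_of_position s.
have p0 : p`_0 = 0 by rewrite (coef_poly_of_position s (ord5 0)) s0.
have p4 : p`_4 != 0 by rewrite (coef_poly_of_position s (ord5 4)) s4.
have [a a_neq0 rootless] := rootless_fill_coef0 v_discrete (size_poly _ _) p0 p4.
by apply: (nora_wins_last_move (i := ord5 0) (a := a)).
Qed.

Lemma nora_wins_fill_coef4 s c :
  s (ord5 4) = None -> s (ord5 0) = Some c -> c != 0 -> nora_wins 1 Nora s.
Proof.
move=> s4 s0 c_neq0.
set p := poly_of_position s.
have p4 : p`_4 = 0 by rewrite (coef_poly_of_position s (ord5 4)) s4.
have p0 : p`_0 != 0 by rewrite (coef_poly_of_position s (ord5 0)) s0.
have [a a_neq0 rootless] := rootless_fill_coef4 v_discrete (size_poly _ _) p4 p0.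
by apply: (nora_wins_last_move (i := ord5 4) (a := a)).
Qed.

Lemma nora_wins_fill_coef2 s c0 c4 :
  s (ord5 1) = Some 0 -> s (ord5 2) = None -> s (ord5 3) = Some 0 ->
  s (ord5 0) = Some c0 -> s (ord5 4) = Some c4 -> c0 != 0 -> c4 != 0 ->
  nora_wins 1 Nora s.
Proof.
move=> s1 s2 s3 s0 s4 c0_neq0 c4_neq0.
set p := poly_of_position s.
have p0 : p`_0 != 0 by rewrite (coef_poly_of_position s (ord5 0)) s0.
have p1 : p`_1 = 0 by rewrite (coef_poly_of_position s (ord5 1)) s1.
have p2 : p`_2 = 0 by rewrite (coef_poly_of_position s (ord5 2)) s2.
have p3 : p`_3 = 0 by rewrite (coef_poly_of_position s (ord5 3)) s3.
have p4 : p`_4 != 0 by rewrite (coef_poly_of_position s (ord5 4)) s4.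
have [a rootless] := rootless_fill_coef2 v_discrete (size_poly _ _) p1 p2 p3 p0 p4.
by apply: (nora_wins_last_move (i := ord5 2) (a := a)) => //; split => //; case.
Qed.

Lemma nora_wins_ends_open s :
  s (ord5 0) = None -> s (ord5 4) = None ->
  s (ord5 1) != None -> s (ord5 2) != None -> s (ord5 3) != None ->
  nora_wins 2 Wanda s.
Proof.
move=> s0 s4 s1 s2 s3; apply: forall_ord5 => a [s_i a_nz].
- apply: (nora_wins_fill_coef4 (c := a)); rewrite /play //=.
  by apply: a_nz; left.
- by rewrite s_i in s1.
- by rewrite s_i in s2.
- by rewrite s_i in s3.
- apply: (nora_wins_fill_coef0 (c := a)); rewrite /play //=.
  by apply: a_nz; right.
Qed.

Lemma nora_wins_odd_zero_coef0_set s c :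
  s (ord5 0) = Some c -> c != 0 -> s (ord5 1) = Some 0 -> s (ord5 3) = Some 0 ->
  s (ord5 2) = None -> s (ord5 4) = None -> nora_wins 2 Wanda s.
Proof.
move=> s0 c_neq0 s1 s3 s2 s4; apply: forall_ord5 => a [s_i a_nz].
- by rewrite s_i in s0.
- by rewrite s_i in s1.
- by apply: (nora_wins_fill_coef4 (c := c)); rewrite /play.
- by rewrite s_i in s3.
- apply: (nora_wins_fill_coef2 (c0 := c) (c4 := a)); rewrite /play //=.
  by apply: a_nz; right.
Qed.

Lemma nora_wins_odd_zero_coef4_set s c :
  s (ord5 4) = Some c -> c != 0 -> s (ord5 1) = Some 0 -> s (ord5 3) = Some 0 ->
  s (ord5 0) = None -> s (ord5 2) = None -> nora_wins 2 Wanda s.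
Proof.
move=> s4 c_neq0 s1 s3 s0 s2; apply: forall_ord5 => a [s_i a_nz].
- apply: (nora_wins_fill_coef2 (c0 := a) (c4 := c)); rewrite /play //=.
  by apply: a_nz; left.
- by rewrite s_i in s1.
- by apply: (nora_wins_fill_coef0 (c := c)); rewrite /play.
- by rewrite s_i in s3.
- by rewrite s_i in s4.
Qed.

Lemma nora_wins_after_coef1_zero :
  nora_wins 4 Wanda (play (@empty_position K 4) (ord5 1) 0).
Proof.
apply: forall_ord5 => a [s_i a_nz]; rewrite /play /= in s_i.
- exists (ord5 3), 0; split; first by split => //; case.
  apply: (nora_wins_odd_zero_coef0_set (c := a)); rewrite /play //=.
  by apply: a_nz; left.
- by [].
- exists (ord5 3), 0; split; first by split => //; case.
  by apply: nora_wins_ends_open; rewrite /play.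
- exists (ord5 2), 0; split; first by split => //; case.
  by apply: nora_wins_ends_open; rewrite /play.
- exists (ord5 3), 0; split; first by split => //; case.
  apply: (nora_wins_odd_zero_coef4_set (c := a)); rewrite /play //=.
  by apply: a_nz; right.
Qed.

End QuarticGame.

Theorem proposition1 (K : fieldType) (v : K -> int)
    (Hv : is_discrete_valuation v) (Hc : vcomplete v) (first : player) :
  last_mover 4 first = Nora -> nora_has_winning_strategy K 4 first.
Proof.
case: first => //= _.
exists (ord5 1), 0; split; first by split => //; case.
exact: nora_wins_after_coef1_zero Hv.
Qed.
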